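(* Let $A$ be a nonzero commutative nilpotent $\mathbb{F}_p$-algebra of finite dimension with $A^e\ne0$, $A^{e+1}=0$. For $1\le r\le e$ let $t_r=\dim_{\mathbb{F}_p}(N_r/N_{r-1})$. Then the number $i(A)$ of ideals of $A$ satisfies \[ i(A)\ge \lambda(A):=s(t_1)+\sum_{r=2}^{e}\bigl(s(t_r)-1\bigr), \] where $s(m)$ denotes the number of subspaces of an $m$-dimensional $\mathbb{F}_p$-vector space.
   Context: Algebras are commutative, associative, not necessarily unital. $N_k=\{a\in A: x_1\cdots x_k a=0\ \forall x_1,\dots,x_k\in A\}$, $N_0=0$, so $0\subset N_1\subset\cdots\subset N_e=A$. *)

From HB Require Import structures.
From mathcomp Require Import all_boot all_order all_algebra all_field.
Set Implicit Arguments. Unset Strict Implicit. Unset Printing Implicit Defensive.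
Import GRing.Theory.
Local Open Scope ring_scope.

(* Over a finite ring, subspaces of a finite-dimensional space form a finite type
   (via their canonical matrix representation). *)
Module FinVspace.
Import VectorInternalTheory.
HB.instance Definition _ (R : finFieldType) (vT : vectType R) :=
  [Countable of {vspace vT} by <:].
HB.instance Definition _ (R : finFieldType) (vT : vectType R) :=
  [Finite of {vspace vT} by <:].
End FinVspace.
Export FinVspace.

Section NilAlg.
Variables (F : finFieldType) (A : vectType F) (mul : A -> A -> A).

Local Notation fA := (finvect_type A).

Definition lmul_seq (xs : seq A) (a : A) : A := foldr mul a xs.

(* A^k : the span of all products of k elements (k >= 1). *)
Definition apow (k : nat) : {vspace A} :=
  <<[seq lmul_seq (tval xs) (x : A) | x <- enum fA, xs <- enum [pred _ : (k.-1).-tuple fA | true]]>>%VS.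

(* N_k = { a | x_1 ... x_k a = 0 for all x_i }  (N_0 = 0). *)
Definition annN (k : nat) : {vspace A} :=
  <<[seq (a : A) | a <- enum fA & [forall xs : k.-tuple fA, lmul_seq (tval xs) a == 0%R]]>>%VS.

Definition tdim (r : nat) : nat := (\dim (annN r) - \dim (annN r.-1))%N.

Definition is_ideal (U : {vspace A}) : bool :=
  [forall a : fA, forall u : fA, (u \in U) ==> (mul a u \in U)].

Definition num_ideals : nat := #|[set U : {vspace A} | is_ideal U]|.

End NilAlg.

Definition nsub (F : finFieldType) (m : nat) : nat := #|{: {vspace 'rV[F]_m}}|.

(* Since [A N_r ⊆ N_(r-1)], every subspace U with [N_(r-1) ⊆ U ⊆ N_r] is an
   ideal.  Such an interval contains at least [s(t_r)] subspaces, namely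
   [N_(r-1) + S] for S ranging over the subspaces of a complement of
   [N_(r-1)] in [N_r], and consecutive intervals share only their endpoint
   [N_(r-1)], which is already counted. *)
From HB Require Import structures.
From mathcomp Require Import all_boot all_order all_algebra all_field zify.
Set Implicit Arguments. Unset Strict Implicit. Unset Printing Implicit Defensive.
Import GRing.Theory.
Local Open Scope ring_scope.

Section LinComb.
Variables (F : fieldType) (vT : vectType F) (n : nat) (X : n.-tuple vT).

Definition lincomb (rw : 'rV[F]_n) : vT := \sum_i rw 0 i *: X`_i.

Fact lincomb_is_linear : linear lincomb.
Proof.
move=> k u v; rewrite /lincomb scaler_sumr -big_split; apply: eq_bigr => i _.
by rewrite !mxE scalerDl scalerA.
Qed.
HB.instance Definition _ := GRing.isSemilinear.Build F 'rV[F]_n vT _ lincomb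
  (GRing.semilinear_linear lincomb_is_linear).

Lemma memv_lincomb rw : lincomb rw \in <<X>>%VS.
Proof. by apply: rpred_sum => i _; rewrite rpredZ ?memv_span ?mem_nth ?size_tuple. Qed.

Lemma lincomb_inj : free X -> injective lincomb.
Proof.
move=> freeX u v euv; apply/rowP => j.
rewrite -(coord_sum_free (u 0) j freeX) -(coord_sum_free (v 0) j freeX).
exact: (congr1 (coord X j) euv).
Qed.
End LinComb.

Section SubspaceCount.
Variables (F : finFieldType) (vT : vectType F).

Definition subv_interval (V W : {vspace vT}) :=
  [set U : {vspace vT} | (V <= U)%VS && (U <= W)%VS].

Lemma card_vspace_le_limg (uT : vectType F) (f : 'Hom(uT, vT)) :
  lker f == 0%VS ->
  (#|{: {vspace uT}}| <= #|[set U : {vspace vT} | (U <= limg f)%VS]|)%N.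
Proof.
move=> kerf0; have img_inj : injective (fun S => (f @: S)%VS).
  by move=> S1 S2 /eqP; rewrite eq_limg_ker0 // => /eqP.
rewrite -(card_imset _ img_inj); apply/subset_leq_card/subsetP => _ /imsetP[S _ ->].
by rewrite inE limgS ?subvf.
Qed.

Lemma nsub_le_card_subv (C : {vspace vT}) :
  (nsub F (\dim C) <= #|[set U : {vspace vT} | (U <= C)%VS]|)%N.
Proof.
pose f := linfun (lincomb (vbasis C)).
have kerf0 : lker f == 0%VS.
  apply/lker0P => u v; rewrite !lfunE; apply/lincomb_inj/basis_free/vbasisP.
apply: leq_trans (card_vspace_le_limg kerf0) _.
apply/subset_leq_card/subsetP => U; rewrite !inE => /subv_trans; apply.
apply/subvP => _ /memv_imgP[u _ ->]; rewrite lfunE /=.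
by have := memv_lincomb (vbasis C) u; rewrite (span_basis (vbasisP C)).
Qed.

Lemma addv_subv_direct (V C S1 S2 : {vspace vT}) :
  (C :&: V = 0)%VS -> (S1 <= C)%VS -> (S2 <= C)%VS ->
  (V + S1 <= V + S2)%VS -> (S1 <= S2)%VS.
Proof.
move=> CV0 /subvP S1C /subvP S2C /subvP le12; apply/subvP => x xS1.
have /memv_addP[v vV [s sS2 exvs]] : x \in (V + S2)%VS.
  by apply: le12; rewrite -[x]add0r memv_add ?mem0v.
have : x - s \in (C :&: V)%VS.
  by rewrite memv_cap rpredB ?(S1C x) ?(S2C s) //= exvs addrK.
by rewrite CV0 memv0 subr_eq0 => /eqP ->.
Qed.

Lemma nsub_le_card_interval (V W : {vspace vT}) : (V <= W)%VS ->
  (nsub F (\dim W - \dim V) <= #|subv_interval V W|)%N.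
Proof.
move=> VW; set C := (W :\: V)%VS.
have -> : (\dim W - \dim V)%N = \dim C.
  by rewrite -(dimv_cap_compl W V) (capv_idPr VW) addKn.
apply: leq_trans (nsub_le_card_subv C) _.
have addV_inj : {in [set U | (U <= C)%VS] &, injective (fun S => V + S)%VS}.
  move=> S1 S2; rewrite !inE => S1C S2C eS.
  by apply/subv_anti/andP; split; apply: (addv_subv_direct (capv_diff W V)); rewrite ?eS.
rewrite -(card_in_imset addV_inj); apply/subset_leq_card/subsetP => U /imsetP[S].
rewrite inE => SC ->{U}; rewrite inE addvSl subv_add VW.
exact: subv_trans SC (diffvSl W V).
Qed.
End SubspaceCount.

Section Annihilators.
Variables (F : finFieldType) (A : vectType F) (mul : A -> A -> A).
Hypotheses (mulC : commutative mul) (mulDl : left_distributive mul +%R)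
  (mulZl : forall (k : F) (x y : A), mul (k *: x) y = k *: mul x y).

Lemma lmul_seq_is_linear xs : linear (lmul_seq mul xs).
Proof.
elim: xs => [|x xs IH] k a b //=.
by rewrite IH mulC mulDl mulZl -!(mulC x).
Qed.
HB.instance Definition _ xs := GRing.isSemilinear.Build F A A _ (lmul_seq mul xs)
  (GRing.semilinear_linear (lmul_seq_is_linear xs)).

Lemma memv_annN k a :
  a \in annN mul k <-> (forall xs, size xs = k -> lmul_seq mul xs a = 0).
Proof.
split=> [aN xs sz | aP].
  suff : (annN mul k <= lker (linfun (lmul_seq mul xs)))%VS.
    by move/subvP/(_ a aN); rewrite memv_ker lfunE => /eqP.
  apply/span_subvP => _ /mapP[b + ->]; rewrite mem_filter => /andP[/forallP bP _].
  by rewrite memv_ker lfunE; apply: (bP (Tuple (introT eqP sz))).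
apply/memv_span/mapP; exists a => //; rewrite mem_filter (@mem_enum (finvect_type A)) andbT.
by apply/forallP => xs; apply/eqP/aP; rewrite size_tuple.
Qed.

Lemma annNS k : (annN mul k <= annN mul k.+1)%VS.
Proof.
apply/subvP => a /memv_annN aP; apply/memv_annN => -[|x xs] //= [sz].
by rewrite aP // -[mul x 0]/(lmul_seq mul [:: x] 0) linear0.
Qed.

Lemma annN_mul k x a : a \in annN mul k.+1 -> mul x a \in annN mul k.
Proof.
move/memv_annN => aP; apply/memv_annN => xs sz.
rewrite -[mul x a]/(lmul_seq mul [:: x] a) /lmul_seq -foldr_cat.
by apply: aP; rewrite size_cat sz addn1.
Qed.

Lemma is_ideal_between k (U : {vspace A}) :
  (annN mul k <= U)%VS -> (U <= annN mul k.+1)%VS -> is_ideal mul U.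
Proof.
move=> NkU /subvP UNk1; apply/forallP => x; apply/forallP => u; apply/implyP => uU.
exact: subvP NkU _ (annN_mul x (UNk1 _ uU)).
Qed.

Lemma is_ideal_annN k : is_ideal mul (annN mul k).
Proof. exact: is_ideal_between (subvv _) (annNS k). Qed.

Definition ideals_in (W : {vspace A}) :=
  [set U : {vspace A} | is_ideal mul U && (U <= W)%VS].

Lemma card_ideals_in_annNS k :
  (#|ideals_in (annN mul k)| + (#|subv_interval (annN mul k) (annN mul k.+1)| - 1)
    <= #|ideals_in (annN mul k.+1)|)%N.
Proof.
set I := ideals_in _; set J := subv_interval _ _.
have IJ : (I :&: J = [set annN mul k])%SET.
  apply/setP => U; rewrite !inE; apply/idP/eqP => [|->].
    by case/andP=> /andP[_ UN] /andP[NU _]; apply/subv_anti; rewrite UN NU.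
  by rewrite is_ideal_annN subvv annNS.
have sub : (I :|: J \subset ideals_in (annN mul k.+1))%SET.
  apply/subsetP => U; rewrite !inE => /orP[/andP[-> /subv_trans-> //] | /andP[NU UN]].
    exact: annNS.
  by rewrite UN (is_ideal_between NU UN).
have := cardsUI I J; have := subset_leq_card sub; have := subset_leq_card (subsetUl I J).
by rewrite IJ cards1; lia.
Qed.

Lemma nsub_tdim_le_card_interval k :
  (nsub F (tdim mul k.+1) <= #|subv_interval (annN mul k) (annN mul k.+1)|)%N.
Proof. exact: nsub_le_card_interval (annNS k). Qed.

Lemma lambda_le_card_ideals_in n :
  (nsub F (tdim mul 1) + \sum_(2 <= r < n.+2) (nsub F (tdim mul r) - 1)
     <= #|ideals_in (annN mul n.+1)|)%N.
Proof.
elim: n => [|n IH].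
  have := card_ideals_in_annNS 0; have := nsub_tdim_le_card_interval 0.
  rewrite (cardsD1 (annN mul 0) (ideals_in _)) inE is_ideal_annN subvv big_geq //.
  lia.
rewrite big_nat_recr // addnA; apply: leq_trans (card_ideals_in_annNS n.+1).
exact: leq_add IH (leq_sub2r 1 (nsub_tdim_le_card_interval n.+1)).
Qed.
End Annihilators.

Theorem proposition3p1 (p : nat) (hp : prime p) (A : vectType 'F_p)
    (mul : A -> A -> A)
    (mulC : commutative mul) (mulA : associative mul)
    (mulDl : left_distributive mul +%R)
    (mulZl : forall (k : 'F_p) (x y : A), mul (k *: x) y = k *: mul x y)
    (A_nz : (fullv : {vspace A}) != 0%VS)
    (e : nat) (e_gt0 : (0 < e)%N)
    (Ae_nz : apow mul e != 0%VS) (Ae1_0 : apow mul e.+1 = 0%VS) :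
  (nsub 'F_p (tdim mul 1)
     + \sum_(2 <= r < e.+1) (nsub 'F_p (tdim mul r) - 1)
   <= num_ideals mul)%N.
Proof.
have := lambda_le_card_ideals_in mulC mulDl mulZl e.-1; rewrite prednK // => lambda_le.
apply: leq_trans lambda_le _; apply/subset_leq_card/subsetP => U.
by rewrite !inE => /andP[].
Qed.
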